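(* $\mathsf{Gap_{tot}P}=\mathsf{GapP}$.
   Context: An NPTM is a non-deterministic polynomial-time Turing machine. For an NPTM $M$ and input $x$, $acc_M(x)$ and $rej_M(x)$ denote the numbers of accepting and rejecting computation paths of $M$ on $x$, and $tot_M(x)$ denotes the number of all computation paths of $M$ on $x$ minus $1$. $\mathsf{TotP}=\{tot_M\mid M \text{ an NPTM}\}$, $\mathsf{GapP}=\{acc_M-rej_M\mid M\text{ an NPTM}\}$ (functions $\Sigma^*\to\mathbb{Z}$). $\mathsf{Gap_{tot}P}$ is the class of functions $f$ that are the difference $f=g-h$ of two functions $g,h\in\mathsf{TotP}$. *)

(* A concrete model of non-deterministic polynomial-time
   Turing machines (single two-way-infinite tape, input alphabet {0,1}). *)
From HB Require Import structures.
From mathcomp Require Import all_boot all_algebra.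
Set Implicit Arguments. Unset Strict Implicit. Unset Printing Implicit Defensive.
Import GRing.Theory Num.Theory.

Inductive dir := DL | DS | DR.

Definition dir_eqb (d e : dir) : bool :=
  match d, e with DL, DL | DS, DS | DR, DR => true | _, _ => false end.
Lemma dir_eqP : Equality.axiom dir_eqb.
Proof. by case; case; constructor. Qed.
HB.instance Definition _ := hasDecEq.Build dir dir_eqP.

(* The transition relation is given as a
   duplicate-free list of possible moves; a configuration with no possible
   move is halting, and it is accepting iff its state satisfies [qacc]. *)
Unset Implicit Arguments.
Record NTM := {
  Q : finType;
  Gam : finType;
  blank : Gam;
  sym_of : bool -> Gam;
  sym_of_inj : injective sym_of;
  blank_fresh : forall b, sym_of b != blank;
  q0 : Q;
  qacc : pred Q;
  delta : Q -> Gam -> seq (Q * Gam * dir);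
  delta_uniq : forall q a, uniq (delta q a) }.
Set Implicit Arguments.

(* configuration: state, tape left of head (nearest first), scanned symbol,
   tape right of head (nearest first); unlisted cells are blank *)
Definition config (M : NTM) := (Q M * seq (Gam M) * Gam M * seq (Gam M))%type.

Definition move (M : NTM) (q : Q M) (d : dir) (l : seq (Gam M)) (b : Gam M)
    (r : seq (Gam M)) : config M :=
  match d with
  | DS => (q, l, b, r)
  | DL => match l with
          | [::] => (q, [::], blank M, b :: r)
          | c :: l' => (q, l', c, b :: r)
          end
  | DR => match r with
          | [::] => (q, b :: l, blank M, [::])
          | c :: r' => (q, b :: l, c, r')
          end
  end.

Definition step (M : NTM) (c : config M) : seq (config M) :=
  let: (q, l, a, r) := c in
  map (fun t : Q M * Gam M * dir => let: (q', b, d) := t in @move M q' d l b r)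
      (delta M q a).

Definition state (M : NTM) (c : config M) : Q M := c.1.1.1.

Definition add_opt (u v : option (nat * nat)) : option (nat * nat) :=
  match u, v with
  | Some (a1, r1), Some (a2, r2) => Some (a1 + a2, r1 + r2)
  | _, _ => None
  end.

(* [run fuel c] = Some (number of accepting paths, number of rejecting paths)
   of the computation tree from c, provided every path halts within [fuel]
   steps; None otherwise. *)
Fixpoint run (M : NTM) (fuel : nat) (c : config M) : option (nat * nat) :=
  match step c with
  | [::] => Some (if qacc M (state c) then (1, 0) else (0, 1))
  | cs => match fuel with
          | 0 => None
          | f.+1 => foldr (fun c' acc => add_opt (@run M f c') acc) (Some (0, 0)) cs
          end
  end.

Definition init (M : NTM) (x : seq bool) : config M :=
  match x with
  | [::] => (q0 M, [::], blank M, [::])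
  | b :: x' => (q0 M, [::], sym_of M b, map (sym_of M) x')
  end.

(* NPTM: every computation path on input x halts within |x|^k + k steps
   (every polynomial bound is dominated by one of this form). *)
Unset Implicit Arguments.
Record NPTM := {
  mach : NTM;
  pexp : nat;
  ptime : forall x : seq bool, @run mach (size x ^ pexp + pexp) (init mach x) <> None }.
Set Implicit Arguments.

Definition paths (M : NPTM) (x : seq bool) : nat * nat :=
  match @run (mach M) (size x ^ pexp M + pexp M) (init (mach M) x) with
  | Some p => p
  | None => (0, 0)
  end.

Definition acc (M : NPTM) (x : seq bool) : nat := (paths M x).1.
Definition rej (M : NPTM) (x : seq bool) : nat := (paths M x).2.
Definition tot (M : NPTM) (x : seq bool) : nat := (acc M x + rej M x).-1.

Definition TotP (f : seq bool -> nat) : Prop :=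
  exists M : NPTM, forall x, f x = tot M x.

Definition GapP (f : seq bool -> int) : Prop :=
  exists M : NPTM, forall x, f x = ((acc M x)%:Z - (rej M x)%:Z)%R.

Definition Gap_totP (f : seq bool -> int) : Prop :=
  exists g h : seq bool -> nat,
    [/\ TotP g, TotP h & forall x, f x = ((g x)%:Z - (h x)%:Z)%R].

From mathcomp Require Import all_boot all_algebra.
From mathcomp Require Import zify.
Set Implicit Arguments. Unset Strict Implicit. Unset Printing Implicit Defensive.

(* Both inclusions are machine constructions, and the path counts of each new
   machine are read off by one simulation lemma: a projection of configurations
   that commutes with [step] on an invariant transports the (accepting,
   rejecting) counts through an additive map.
   GapP in Gap_totP: for a machine M with a accepting and r rejecting paths,
   let M_b run M and then split every halting path whose verdict is b in two,
   accepting everywhere. M_true has 2a + r paths and M_false has a + 2r, so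
   tot M_true - tot M_false = a - r.
   Gap_totP in GapP: given M1 and M2, branch once into M1 or M2, accepting on
   every path of M1 and rejecting on every path of M2; then
   acc - rej = (tot M1 + 1) - (tot M2 + 1). *)

Definition verdict (M : NTM) (c : config M) : nat * nat :=
  if qacc M (state c) then (1, 0) else (0, 1).

Definition run_all (M : NTM) (f : nat) (s : seq (config M)) : option (nat * nat) :=
  foldr (fun c acc => add_opt (run f c) acc) (Some (0, 0)) s.

Lemma run_halt (M : NTM) f (c : config M) : step c = [::] -> run f c = Some (verdict c).
Proof. by case: f => [|f] /= ->. Qed.

Lemma run0_step (M : NTM) (c : config M) : step c != [::] -> run 0 c = None.
Proof. by rewrite /=; case: (step c). Qed.

Lemma run_step (M : NTM) f (c : config M) : step c != [::] -> run f.+1 c = run_all f (step c).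
Proof. by rewrite /= /run_all; case: (step c). Qed.

Section Simulation.

Variables (N M : NTM) (P : pred (config N)) (pi : config N -> config M).
Variables (k : nat) (h : nat * nat -> nat * nat).
Hypothesis h0 : h (0, 0) = (0, 0).
Hypothesis hD : {morph omap h : u v / add_opt u v}.
Hypothesis sim_step : forall c, P c -> step (pi c) != [::] ->
  map pi (step c) = step (pi c) /\ all P (step c).
Hypothesis sim_halt : forall f c, P c -> step (pi c) = [::] ->
  run (f + k) c = Some (h (verdict (pi c))).

Lemma run_sim f c p : P c -> run f (pi c) = Some p -> run (f + k) c = Some (h p).
Proof.
elim: f c p => [|f IH] c p Pc.
all: have [halt|moving] := eqVneq (step (pi c)) [::];
  first by rewrite run_halt // => -[<-]; apply: sim_halt.
  by rewrite run0_step.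
have [Epi Pstep] := sim_step Pc moving.
have moving' : step c != [::] by move: moving; rewrite -Epi; case: (step c).
rewrite run_step // addSn run_step // -Epi /run_all.
elim: (step c) Pstep p {Epi moving moving'} => [|c1 s IHs] /= Pstep p.
  by move=> [<-]; rewrite h0.
case/andP: Pstep => P1 Ps.
case E1: (run f (pi c1)) => [[a1 r1]|]; case Es: (foldr _ _ (map pi s)) => [[a2 r2]|] // Ep.
by rewrite (IH _ _ P1 E1) (IHs Ps _ Es) -[Some (h p)]/(omap h (Some p)) -Ep hD.
Qed.

End Simulation.

Lemma run_mono (M : NTM) f f' (c : config M) p :
  f <= f' -> run f c = Some p -> run f' c = Some p.
Proof.
(* the identity simulation, allowed [f' - f] extra steps *)
move=> le_ff'; rewrite -(subnKC le_ff') -[p in Some p]/(id p).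
apply: (@run_sim M M predT id) => // [|c' _ _|f'' c' _ halt].
- by case=> [[? ?]|] [[? ?]|].
- by rewrite map_id all_predT.
- exact: run_halt.
Qed.

Lemma run_pos (M : NTM) f (c : config M) p : run f c = Some p -> 0 < p.1 + p.2.
Proof.
elim: f c p => [|f IH] c p.
all: have [halt|moving] := eqVneq (step c) [::];
  first by rewrite run_halt // /verdict => -[<-]; case: ifP.
  by rewrite run0_step.
rewrite run_step // /run_all; case: (step c) moving => // c1 s _ /=.
case E1: (run f c1) => [[a1 r1]|]; case: (foldr _ _ s) => [[a2 r2]|] // [<-] /=.
by have /= := IH _ _ E1; lia.
Qed.

Lemma paths_run (M : NPTM) x f :
  size x ^ pexp M + pexp M <= f -> run f (init (mach M) x) = Some (paths M x).
Proof.
rewrite /paths; have := ptime M x.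
by case E: (run _ _) => [p|] // _ le_f; apply: run_mono E.
Qed.

Lemma tot_succ (M : NPTM) x : (tot M x).+1 = acc M x + rej M x.
Proof. by rewrite /tot prednK // (run_pos (paths_run (leqnn _))). Qed.

Lemma clock_ltn n e k : e.+1 < k -> n ^ e + e < n ^ k + k.
Proof.
move=> lt_ek; case: n => [|n].
  have : 0 ^ e <= 1 by case: (e) => [|e'] //; rewrite exp0n.
  by rewrite [0 ^ k]exp0n; lia.
have : n.+1 ^ e <= n.+1 ^ k by rewrite leq_pexp2l //; lia.
lia.
Qed.

Definition nptm_of (N : NTM) (e : nat) (F : seq bool -> nat * nat)
    (runF : forall x, run (size x ^ e + e) (init N x) = Some (F x)) : NPTM.
Proof. by exists N e => x; rewrite runF. Defined.

Lemma paths_nptm_of N e F runF x : paths (@nptm_of N e F runF) x = F x.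
Proof. by rewrite /paths /= runF. Qed.

Lemma state_move (M : NTM) q d l b r : state (@move M q d l b r) = q.
Proof. by case: d; [case: l | | case: r]. Qed.

Definition config_map (M N : NTM) (fq : Q M -> Q N) (g : Gam M -> Gam N)
    (c : config M) : config N :=
  let: (q, l, a, r) := c in (fq q, map g l, g a, map g r).

Lemma config_map_move (M N : NTM) fq (g : Gam M -> Gam N) q d l b r :
  g (blank M) = blank N ->
  config_map fq g (move q d l b r) = move (fq q) d (map g l) (g b) (map g r).
Proof. by move=> gblank; case: d; [case: l | | case: r]; rewrite /= ?gblank. Qed.

Section Fork.

Variables M1 M2 : NTM.

(* The input is written on two tracks, one per machine, so that either machine
   can start right after the initial branching. *)

Definition fork_sym (b : bool) : Gam M1 * Gam M2 := (sym_of M1 b, sym_of M2 b).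

Lemma fork_sym_inj : injective fork_sym.
Proof. by move=> b1 b2 [/(@sym_of_inj M1)]. Qed.

Lemma fork_sym_fresh b : fork_sym b != (blank M1, blank M2).
Proof. by rewrite xpair_eqE (negbTE (blank_fresh M1 b)). Qed.

Definition fork_delta (q : option (Q M1 + Q M2)) (a : Gam M1 * Gam M2) :
    seq (option (Q M1 + Q M2) * (Gam M1 * Gam M2) * dir) :=
  match q with
  | None => [:: (Some (inl (q0 M1)), a, DS); (Some (inr (q0 M2)), a, DS)]
  | Some (inl q1) => [seq (Some (inl t.1.1), (t.1.2, a.2), t.2) | t <- delta M1 q1 a.1]
  | Some (inr q2) => [seq (Some (inr t.1.1), (a.1, t.1.2), t.2) | t <- delta M2 q2 a.2]
  end.

Lemma fork_delta_uniq q a : uniq (fork_delta q a).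
Proof.
case: q => [[q1|q2]|] //=; rewrite map_inj_uniq ?delta_uniq //.
all: by move=> [[? ?] ?] [[? ?] ?] [-> -> ->].
Qed.

Definition fork : NTM :=
  Build_NTM _ _ (blank M1, blank M2) fork_sym fork_sym_inj fork_sym_fresh None
    (fun q => if q is Some (inl _) then true else false) fork_delta fork_delta_uniq.

Definition fork_left (c : config fork) : bool := if state c is Some (inl _) then true else false.
Definition fork_right (c : config fork) : bool := if state c is Some (inr _) then true else false.

Definition fork_projl : config fork -> config M1 :=
  config_map (fun q : Q fork => if q is Some (inl q1) then q1 else q0 M1) fst.
Definition fork_projr : config fork -> config M2 :=
  config_map (fun q : Q fork => if q is Some (inr q2) then q2 else q0 M2) snd.

Lemma step_fork_left c : fork_left c ->
  map fork_projl (step c) = step (fork_projl c) /\ all fork_left (step c).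
Proof.
case: c => [[[[[q|q]|] l] a] r] //= _; rewrite -!map_comp all_map; split.
  by apply: eq_map => -[[q' b] d]; apply: config_map_move.
by apply/allP => -[[q' b] d] _; rewrite /= /fork_left state_move.
Qed.

Lemma step_fork_right c : fork_right c ->
  map fork_projr (step c) = step (fork_projr c) /\ all fork_right (step c).
Proof.
case: c => [[[[[q|q]|] l] a] r] //= _; rewrite -!map_comp all_map; split.
  by apply: eq_map => -[[q' b] d]; apply: config_map_move.
by apply/allP => -[[q' b] d] _; rewrite /= /fork_right state_move.
Qed.

Lemma run_fork_left f c p :
  fork_left c -> run f (fork_projl c) = Some p -> run f c = Some (p.1 + p.2, 0).
Proof.
rewrite -[f in run f c]addn0.
apply: (run_sim (P := fork_left) (h := fun p => (p.1 + p.2, 0))) => // [|c' Pc' _|f' c' Pc' halt].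
- by case=> [[? ?]|] [[? ?]|] //=; rewrite addnACA.
- exact: step_fork_left.
have [Eproj _] := step_fork_left Pc'; rewrite halt in Eproj.
rewrite run_halt; last by case: (step c') Eproj.
by move: Pc'; rewrite /verdict /fork_left /=; case: (state c') => [[]|]; case: ifP.
Qed.

Lemma run_fork_right f c p :
  fork_right c -> run f (fork_projr c) = Some p -> run f c = Some (0, p.1 + p.2).
Proof.
rewrite -[f in run f c]addn0.
apply: (run_sim (P := fork_right) (h := fun p => (0, p.1 + p.2))) => // [|c' Pc' _|f' c' Pc' halt].
- by case=> [[? ?]|] [[? ?]|] //=; rewrite addnACA.
- exact: step_fork_right.
have [Eproj _] := step_fork_right Pc'; rewrite halt in Eproj.
rewrite run_halt; last by case: (step c') Eproj.
by move: Pc'; rewrite /verdict /fork_right /=; case: (state c') => [[]|]; case: ifP.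
Qed.

Lemma run_fork x f p1 p2 : run f (init M1 x) = Some p1 -> run f (init M2 x) = Some p2 ->
  run f.+1 (init fork x) = Some (p1.1 + p1.2, p2.1 + p2.2).
Proof.
set a := (init fork x).1.2; set r := (init fork x).2.
set c1 : config fork := (Some (inl (q0 M1)), [::], a, r).
set c2 : config fork := (Some (inr (q0 M2)), [::], a, r).
have step_init : step (init fork x) = [:: c1; c2].
  by rewrite /c1 /c2 /a /r; clear; case: x.
have [init1 init2] : fork_projl c1 = init M1 x /\ fork_projr c2 = init M2 x.
  by rewrite /c1 /c2 /a /r; clear; case: x => //= b x; rewrite -!map_comp.
rewrite run_step ?step_init // /run_all /= -init1 -init2.
move=> /(run_fork_left (c := c1) isT) -> /(run_fork_right (c := c2) isT) ->.
by rewrite /= !addn0.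
Qed.

End Fork.

Section DupLeaves.

Variables (M : NTM) (b : bool).

Definition dup_delta (q : Q M + bool) (a : Gam M) : seq ((Q M + bool) * Gam M * dir) :=
  match q with
  | inl q =>
    if delta M q a is [::] then
      (inr true, a, DS) :: (if qacc M q == b then [:: (inr false, a, DS)] else [::])
    else [seq (inl t.1.1, t.1.2, t.2) | t <- delta M q a]
  | inr _ => [::]
  end.

Lemma dup_delta_uniq q a : uniq (dup_delta q a).
Proof.
case: q => [q|] //=; case: (delta M q a) (delta_uniq M q a) => [_|t s].
  by case: ifP.
by rewrite map_inj_uniq // => -[[? ?] ?] [[? ?] ?] [-> -> ->].
Qed.

Definition dup_leaves : NTM :=
  Build_NTM _ _ (blank M) (sym_of M) (@sym_of_inj M) (@blank_fresh M) (inl (q0 M))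
    (fun _ => true) dup_delta dup_delta_uniq.

Definition dup_running (c : config dup_leaves) : bool := if state c is inl _ then true else false.

Definition dup_proj : config dup_leaves -> config M :=
  config_map (fun q : Q dup_leaves => if q is inl q then q else q0 M) id.

Definition dup_lift : config M -> config dup_leaves := @config_map M dup_leaves inl id.

Definition dup_count (p : nat * nat) : nat * nat := (p.1 + p.2 + (if b then p.1 else p.2), 0).

Lemma step_dup_running c : dup_running c -> step (dup_proj c) != [::] ->
  map dup_proj (step c) = step (dup_proj c) /\ all dup_running (step c).
Proof.
case: c => [[[[q|] l] a] r] //= _; rewrite /step /= !map_id.
case: (delta M q a) => // t s _; rewrite -!map_comp all_map; split.
  by apply: eq_map => -[[q' b'] d]; rewrite /= /dup_proj config_map_move // !map_id.
by apply/allP => -[[q' b'] d] _; rewrite /= /dup_running state_move.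
Qed.

Lemma run_dup_halt f c : dup_running c -> step (dup_proj c) = [::] ->
  run (f + 1) c = Some (dup_count (verdict (dup_proj c))).
Proof.
case: c => [[[[q|] l] a] r] //= _; rewrite /step /= addn1 /verdict /=.
case: (delta M q a) => // _.
by rewrite /dup_count; case: (qacc M q); case: b; rewrite /= ?run_halt.
Qed.

Lemma run_dup_leaves f (c : config M) p :
  run f c = Some p -> run f.+1 (dup_lift c) = Some (dup_count p).
Proof.
have proj_lift : dup_proj (dup_lift c) = c by case: c => [[[q l] a] r]; rewrite /= !map_id.
rewrite -addn1 -{1}proj_lift.
apply: (run_sim (P := dup_running)) => [||c'||].
- by rewrite /dup_count; case: b.
- by rewrite /dup_count; case=> [[? ?]|] [[? ?]|] //=; case: b; congr (Some (_, _)); lia.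
- exact: step_dup_running.
- exact: run_dup_halt.
- by case: c {proj_lift} => [[[q l] a] r].
Qed.

End DupLeaves.

Lemma fork_clock (M1 M2 : NPTM) x :
  run (size x ^ (pexp M1 + pexp M2).+2 + (pexp M1 + pexp M2).+2)
      (init (fork (mach M1) (mach M2)) x) =
  Some (acc M1 x + rej M1 x, acc M2 x + rej M2 x).
Proof.
have lt1 := @clock_ltn (size x) (pexp M1) (pexp M1 + pexp M2).+2 ltac:(lia).
have lt2 := @clock_ltn (size x) (pexp M2) (pexp M1 + pexp M2).+2 ltac:(lia).
rewrite -(ltn_predK lt1); apply: run_fork; apply: paths_run.
all: by rewrite -ltnS (ltn_predK lt1).
Qed.

Lemma dup_clock (M : NPTM) b x :
  run (size x ^ (pexp M).+2 + (pexp M).+2) (init (dup_leaves (mach M) b) x) =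
  Some (dup_count b (paths M x)).
Proof.
have -> : init (dup_leaves (mach M) b) x = dup_lift b (init (mach M) x).
  by case: x => //= ? ?; rewrite map_id.
have lt := @clock_ltn (size x) (pexp M) (pexp M).+2 (ltnSn _).
rewrite -(ltn_predK lt); apply: run_dup_leaves; apply: paths_run.
by rewrite -ltnS (ltn_predK lt).
Qed.

Theorem proposition4 : forall f : seq bool -> int, Gap_totP f <-> GapP f.
Proof.
move=> f; split.
- case=> g [h [[M1 gE] [M2 hE] fE]].
  exists (nptm_of (fork_clock M1 M2)) => x.
  by rewrite /acc /rej paths_nptm_of /= fE gE hE -!tot_succ; lia.
- case=> M fE.
  pose Mb b := nptm_of (dup_clock M b).
  exists (tot (Mb true)), (tot (Mb false)); split; [by exists (Mb true) | by exists (Mb false) |].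
  move=> x; have := tot_succ (Mb true) x; have := tot_succ (Mb false) x.
  by rewrite fE /acc /rej !paths_nptm_of /dup_count /=; lia.
Qed.
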